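(* Let $c\in\mathbb{C}$ and $n\geq 1$. Then the automorphism group of the vertex operator algebra $\mathcal{V}_c^{\otimes n}$ is the symmetric group $S_n$, acting by permutation of tensor factors: $$\mathrm{Aut}\,\mathcal{V}_c^{\otimes n}=S_n .$$
   Context: $\mathcal{V}_c$ denotes the universal Virasoro vertex operator algebra of central charge $c$, generated by a weight-2 vector $\omega$ whose field $L(z)=Y(\omega,z)=\sum_{n\in\mathbb{Z}}L(n)z^{-n-2}$ satisfies $[L(m),L(n)]=(m-n)L(m+n)+\frac{c}{12}(m^3-m)\delta_{m+n,0}$. In $\mathcal{V}_c^{\otimes n}$ write $\omega_i$ for the copy of $\omega$ in the $i$-th tensor factor, with modes $L_i(m)$; the conformal vector of $\mathcal{V}_c^{\otimes n}$ is $\omega_1+\cdots+\omega_n$. $S_n$ acts by $\sigma\cdot L_{i_1}(m_1)\cdots L_{i_k}(m_k)\mathbb{1}=L_{\sigma(i_1)}(m_1)\cdots L_{\sigma(i_k)}(m_k)\mathbb{1}$. *)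

From HB Require Import structures.
From mathcomp Require Import all_boot all_order all_algebra all_fingroup.
From mathcomp Require Import reals.
From mathcomp Require Import complex.
Set Implicit Arguments. Unset Strict Implicit. Unset Printing Implicit Defensive.
Import Order.TTheory GRing.Theory Num.Theory.
Local Open Scope ring_scope.

Definition CC (R : realType) : fieldType := R[i].

Section VOA.
Variable F : fieldType.
Variable V : lmodType F.
(* Y u k v is the k-th mode  u_k v  (Y(u,z) = sum_k u_k z^{-k-1}) *)
Variable Y : V -> int -> V -> V.
Variable vac om : V.

Definition binZ (m : int) (j : nat) : F :=
  (\prod_(t < j) (m - t%:Z)%:~R) / (j`!)%:R.

Definition signZ (n : int) : F := (-1) ^+ `|n|%N.

(* Virasoro modes of the conformal vector: L(m) = om_(m+1) *)
Definition Lmode (w : V) (m : int) (v : V) : V := Y w (m + 1) v.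

Definition VOA_axioms (cV : F) : Prop :=
  (forall k (a : F) u u' v, Y (a *: u + u') k v = a *: Y u k v + Y u' k v) /\
  (forall k (a : F) u v v', Y u k (a *: v + v') = a *: Y u k v + Y u k v') /\
  (forall u v, exists N : int, forall k, N <= k -> Y u k v = 0) /\
  (forall k v, Y vac k v = (if k == -1 then v else 0)) /\
  (forall u, Y u (-1) vac = u) /\
  (forall u k, 0 <= k -> Y u k vac = 0) /\
  (* Jacobi (Borcherds) identity, in modes; the sums are finite by truncation *)
  (forall (u v w : V) (m n k : int), exists K : nat, forall N : nat, (K <= N)%N ->
     \sum_(j < N) binZ m j *: Y (Y u (n + j%:Z) v) (m + k - j%:Z) w =
     \sum_(j < N) ((-1) ^+ j * binZ n j) *:
        (Y u (m + n - j%:Z) (Y v (k + j%:Z) w)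
         - signZ n *: Y v (n + k - j%:Z) (Y u (m + j%:Z) w))) /\
  (forall (m k : int) v,
     Lmode om m (Lmode om k v) - Lmode om k (Lmode om m v) =
     (m - k)%:~R *: Lmode om (m + k) v
     + (cV / 12%:R * (m ^+ 3 - m)%:~R * (m + k == 0)%:R) *: v) /\
  (* L(-1)-derivative property: Y(L(-1)u, z) = d/dz Y(u, z) *)
  (forall u k v, Y (Lmode om (-1) u) k v = - (k%:~R *: Y u (k - 1) v)) /\
  (forall v, exists s : seq (int * V),
     v = \sum_(x <- s) x.2 /\ all (fun x => Lmode om 0 x.2 == x.1%:~R *: x.2) s) /\
  (forall n : int, exists s : seq V, forall v, Lmode om 0 v = n%:~R *: v ->
     exists a : 'I_(size s) -> F, v = \sum_(i < size s) a i *: s`_i) /\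
  (exists N0 : int, forall (n : int) v, n < N0 -> Lmode om 0 v = n%:~R *: v -> v = 0).

Definition is_VOA_aut (g : V -> V) : Prop :=
  (forall (a : F) u v, g (a *: u + v) = a *: g u + g v) /\
  bijective g /\
  (forall u k v, g (Y u k v) = Y (g u) k (g v)) /\
  g om = om.

End VOA.

Section TensorVir.
Variable F : fieldType.
Variable V : lmodType F.
Variable Y : V -> int -> V -> V.
Variable vac : V.
Variable n : nat.
Variable oms : 'I_n -> V.

(* L_{i_1}(m_1) ... L_{i_k}(m_k) 1  for s = [:: (i_1,m_1); ...; (i_k,m_k)] *)
Definition vir_mono (s : seq ('I_n * int)) : V :=
  foldr (fun p v => Lmode Y (oms p.1) p.2 v) vac s.

Definition pbw_le (p q : 'I_n * int) : bool :=
  (p.1 < q.1)%N || ((p.1 == q.1) && (p.2 <= q.2)).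

Definition pbw_adm (s : seq ('I_n * int)) : bool :=
  all (fun p => p.2 <= -2) s && sorted pbw_le s.

(* V is (a copy of) the universal Virasoro VOA V_c^{(x) n} with generators oms:
   the oms i give n mutually commuting Virasoro fields of central charge c,
   and the PBW monomials form a basis of V. *)
Definition is_univ_vir_tensor (c : F) : Prop :=
  (forall (i j : 'I_n) (m k : int) v,
     Lmode Y (oms i) m (Lmode Y (oms j) k v) - Lmode Y (oms j) k (Lmode Y (oms i) m v) =
     if i == j then
       (m - k)%:~R *: Lmode Y (oms i) (m + k) v
       + (c / 12%:R * (m ^+ 3 - m)%:~R * (m + k == 0)%:R) *: v
     else 0) /\
  (forall v, exists S : seq (seq ('I_n * int)), exists a : seq ('I_n * int) -> F,
     all pbw_adm S /\ v = \sum_(s <- S) a s *: vir_mono s) /\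
  (forall (S : seq (seq ('I_n * int))) (a : seq ('I_n * int) -> F),
     uniq S -> all pbw_adm S -> \sum_(s <- S) a s *: vir_mono s = 0 ->
     forall s, s \in S -> a s = 0).

Definition perm_mono (sg : 'S_n) (s : seq ('I_n * int)) : seq ('I_n * int) :=
  map (fun p => (sg p.1, p.2)) s.

End TensorVir.

From HB Require Import structures.
From mathcomp Require Import all_boot all_order all_algebra all_fingroup.
From mathcomp Require Import reals complex zify.
From mathcomp Require boolp.
Set Implicit Arguments. Unset Strict Implicit. Unset Printing Implicit Defensive.
Import Order.TTheory GRing.Theory Num.Theory.
Local Open Scope ring_scope.

(* - Formal combinations of monomials: since admissible monomials are a
     basis, an identity between admissible combinations in V transfers to
     any assignment of vectors to monomials (eval_comb_transfer).
   - Grading: a monomial has L(0)-weight -(m1 + ... + mk); every eigenvector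
     is a combination of admissible monomials of its weight, negative weight
     spaces vanish, and the weight-two space has basis om_1, ..., om_n.
   - Automorphisms are permutations: an automorphism g acts on the weight-two
     space by a matrix A; (om_i)_1 om_j = 2 delta_ij om_j gives
     A_ik A_jk = delta_ij A_jk, and g om = om makes the column sums 1, so A is
     a permutation matrix (idempotent_columns, surj_perm).
   - Permutations are automorphisms: the linear map perm_map sg permuting
     the factors of admissible monomials commutes with every L_i(m), by a
     well-founded induction on the weight and on the PBW order that uses the
     commutation relations (commutes_step); the associativity formula then
     gives perm_map sg (Y u k v) = Y (perm_map sg u) k (perm_map sg v).
   - The action is faithful because the om_i are linearly independent. *)

Section LinearFacts.
Variables (R : pzRingType) (U W : lmodType R) (f : U -> W).
Hypothesis f_lin : linear f.

Lemma linD u v : f (u + v) = f u + f v.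
Proof. by have := f_lin 1 u v; rewrite !scale1r. Qed.

Lemma lin0 : f 0 = 0.
Proof. by apply: (@addrI _ (f 0)); rewrite -linD !addr0. Qed.

Lemma linZ a u : f (a *: u) = a *: f u.
Proof. by rewrite -[a *: u]addr0 f_lin lin0 addr0. Qed.

Lemma linB u v : f (u - v) = f u - f v.
Proof. by rewrite linD -scaleN1r linZ scaleN1r. Qed.

Lemma lin_sum (I : Type) (r : seq I) (P : pred I) (G : I -> U) :
  f (\sum_(i <- r | P i) G i) = \sum_(i <- r | P i) f (G i).
Proof. exact: (big_morph f linD lin0). Qed.

End LinearFacts.

Lemma idempotent_columns (K : fieldType) (I J : finType) (A : I -> J -> K) :
  (forall i j k, A i k * A j k = (i == j)%:R * A j k) ->
  (forall k, \sum_i A i k = 1) ->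
  exists tau : J -> I, forall i k, A i k = (tau k == i)%:R.
Proof.
move=> A_mul A_sum.
have col k : exists i, A i k = 1 /\ forall j, j != i -> A j k = 0.
  have [i Aik] : exists i, A i k != 0.
    apply/existsP; apply: contraT; rewrite negb_exists => /forallP A0.
    have := A_sum k; rewrite big1 => [/eqP|j _]; first by rewrite eq_sym oner_eq0.
    by apply/eqP; rewrite -[_ == _]negbK A0.
  have Aik1 : A i k = 1 by apply: (mulfI Aik); rewrite mulr1 A_mul eqxx mul1r.
  exists i; split => // j ji; have := A_mul j i k.
  by rewrite Aik1 mulr1 (negbTE ji) mul0r.
have [tau htau] := boolp.choice col; exists tau => i k.
have [Atk others] := htau k; case: eqP => [<- //|/eqP ne].
by rewrite others // eq_sym.
Qed.

Lemma surj_perm (T : finType) (tau : T -> T) : (forall i, exists k, tau k = i) ->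
  exists sg : {perm T}, forall k i, (tau k == i) = (k == sg i).
Proof.
move=> tau_surj; have [sec tauK] := boolp.choice tau_surj.
have sec_inj : injective sec by move=> i j e; rewrite -(tauK i) -(tauK j) e.
exists (perm sec_inj) => k i.
have -> : tau k = (perm sec_inj)^-1%g k by rewrite -{1}(permKV (perm sec_inj) k) permE tauK.
by rewrite -(inj_eq (@perm_inj _ (perm sec_inj))) permKV eq_sym.
Qed.

Section VirasoroTensor.
Variables (F : numFieldType) (c : F) (n : nat) (V : lmodType F).
Variables (Y : V -> int -> V -> V) (vac : V) (oms : 'I_n -> V).
Hypothesis hVOA : VOA_axioms Y vac (\sum_(i < n) oms i) (n%:R * c).
Hypothesis hV : is_univ_vir_tensor Y vac oms c.

Local Notation X := ('I_n * int)%type.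
Local Notation om := (\sum_(i < n) oms i).
Local Notation mono := (vir_mono Y vac oms).
Local Notation L i m := (Lmode Y (oms i) m).
Local Notation L0 := (Lmode Y om 0).

Lemma Y_linl k v : linear (fun u => Y u k v).
Proof. by case: hVOA => h _ a u u'; apply: h. Qed.

Lemma Y_linr u k : linear (Y u k).
Proof. by case: hVOA => _ [h _] a v v'; apply: h. Qed.

Lemma L_lin i m : linear (L i m).
Proof. exact: Y_linr. Qed.

Lemma L0_lin : linear L0.
Proof. exact: Y_linr. Qed.

Lemma Y_vac k v : Y vac k v = (if k == -1 then v else 0).
Proof. by case: hVOA => _ [_ [_ [h _]]]. Qed.

Lemma Y_create u : Y u (-1) vac = u.
Proof. by case: hVOA => _ [_ [_ [_ [h _]]]]. Qed.

Lemma Y_annihilate u k : 0 <= k -> Y u k vac = 0.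
Proof. by case: hVOA => _ [_ [_ [_ [_ [h _]]]]]; apply: h. Qed.

(* The associativity formula: the Jacobi identity at m = 0, where only the
   j = 0 term survives on the left-hand side. *)
Lemma Y_assoc a b (l k : int) w : exists K : nat, forall N : nat, (K <= N)%N ->
  Y (Y a l b) k w = \sum_(j < N) ((-1) ^+ j * binZ F l j) *:
        (Y a (0 + l - j%:Z) (Y b (k + j%:Z) w)
         - signZ F l *: Y b (l + k - j%:Z) (Y a (0 + j%:Z) w)).
Proof.
case: hVOA => _ [_ [_ [_ [_ [_ [jacobi _]]]]]].
have [K hK] := jacobi a b w 0 l k; exists (maxn K 1) => N hN.
rewrite -hK; last by apply: leq_trans hN; rewrite leq_maxl.
have : (0 < N)%N by apply: leq_trans hN; rewrite leq_maxr.
case: N {hN} => // N _; rewrite big_ord_recl big1 => [|j _].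
  by rewrite addr0 /binZ big_ord0 /= divr1 scale1r add0r !addr0.
by rewrite /binZ big_ord_recl /= subr0 !mul0r scale0r.
Qed.

Lemma L_comm i j (m k : int) v : L i m (L j k v) = L j k (L i m v) +
   (if i == j then (m - k)%:~R *: L i (m + k) v
       + (c / 12%:R * (m ^+ 3 - m)%:~R * (m + k == 0)%:R) *: v else 0).
Proof. by case: hV => h _; move/eqP: (h i j m k v); rewrite subr_eq addrC => /eqP. Qed.

Lemma L_vac i m : -1 <= m -> L i m vac = 0.
Proof. by move=> hm; rewrite /Lmode Y_annihilate //; lia. Qed.

Lemma mono_cons i m s : mono ((i, m) :: s) = L i m (mono s).
Proof. by []. Qed.

Lemma mono_oms i : mono [:: (i, -2)] = oms i.
Proof. by rewrite mono_cons /Lmode Y_create. Qed.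

Definition eval_comb (W : lmodType F) (f : seq X -> W) (P : seq (seq X * F)) : W :=
  \sum_(p <- P) p.2 *: f p.1.

Definition adm_comb (P : seq (seq X * F)) : bool := all (fun p => pbw_adm p.1) P.

Definition scale_comb (a : F) (P : seq (seq X * F)) : seq (seq X * F) :=
  [seq (p.1, a * p.2) | p <- P].

Definition coef_comb (P : seq (seq X * F)) (t : seq X) : F :=
  \sum_(p <- P) (p.1 == t)%:R * p.2.

Lemma eval_comb_map (U W : lmodType F) (h : U -> W) f P : linear h ->
  h (eval_comb f P) = eval_comb (fun s => h (f s)) P.
Proof. by move=> h_lin; rewrite (lin_sum h_lin); apply: eq_bigr => p _; rewrite linZ. Qed.

Lemma eval_comb_cat (W : lmodType F) (f : seq X -> W) P1 P2 :
  eval_comb f (P1 ++ P2) = eval_comb f P1 + eval_comb f P2.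
Proof. by rewrite /eval_comb big_cat. Qed.

Lemma eval_comb_scale (W : lmodType F) (f : seq X -> W) a P :
  eval_comb f (scale_comb a P) = a *: eval_comb f P.
Proof. by rewrite /eval_comb big_map scaler_sumr; apply: eq_bigr => p _; rewrite scalerA. Qed.

Lemma eval_comb_collect (W : lmodType F) (f : seq X -> W) P (U : seq (seq X)) :
  uniq U -> {subset map fst P <= U} ->
  eval_comb f P = \sum_(t <- U) coef_comb P t *: f t.
Proof.
move=> uU PU; under eq_bigr => t _ do rewrite /coef_comb scaler_suml.
rewrite exchange_big /eval_comb; apply: eq_big_seq => p pP.
rewrite -(big_rmcond_in (pred1 p.1)) /=; last first.
  by move=> t _; rewrite eq_sym => /negbTE ->; rewrite mul0r scale0r.
rewrite -big_filter filter_pred1_uniq ?PU ?map_f // big_seq1.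
by rewrite eqxx mul1r.
Qed.

(* Since admissible monomials form a basis, an identity between admissible
   combinations in V transfers to any assignment of vectors to monomials. *)
Lemma eval_comb_transfer P1 P2 : adm_comb P1 -> adm_comb P2 ->
  eval_comb mono P1 = eval_comb mono P2 ->
  forall (W : lmodType F) (f : seq X -> W), eval_comb f P1 = eval_comb f P2.
Proof.
move=> a1 a2 e W f; set U := undup (map fst (P1 ++ P2)).
have uU : uniq U by exact: undup_uniq.
have sub1 : {subset map fst P1 <= U} by move=> t tP; rewrite mem_undup map_cat mem_cat tP.
have sub2 : {subset map fst P2 <= U} by move=> t tP; rewrite mem_undup map_cat mem_cat tP orbT.
have aU : all (@pbw_adm n) U.
  apply/allP => t; rewrite mem_undup map_cat mem_cat => /orP [] /mapP [p pP ->];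
    [exact: (allP a1) | exact: (allP a2)].
have coefE : {in U, coef_comb P1 =1 coef_comb P2}.
  case: hV => _ [_ mono_indep] t tU; apply/eqP; rewrite -subr_eq0; apply/eqP.
  apply: (mono_indep U (fun t => coef_comb P1 t - coef_comb P2 t) uU aU) => //.
  under eq_bigr => s _ do rewrite scalerBl.
  by rewrite sumrB -(eval_comb_collect _ uU sub1) -(eval_comb_collect _ uU sub2) e subrr.
rewrite (eval_comb_collect _ uU sub1) (eval_comb_collect _ uU sub2).
by apply: eq_big_seq => t tU; rewrite coefE.
Qed.

Lemma eval_comb_span v : exists P, adm_comb P /\ v = eval_comb mono P.
Proof.
case: hV => _ [mono_span _]; have [S [a [aS ->]]] := mono_span v.
exists [seq (s, a s) | s <- S]; split; first by rewrite /adm_comb all_map.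
by rewrite /eval_comb big_map.
Qed.

Definition weight (s : seq X) : int := \sum_(p <- s) - p.2.

Lemma weight_cons p s : weight (p :: s) = - p.2 + weight s.
Proof. by rewrite /weight big_cons. Qed.

(* Admissible monomials have all modes <= -2, so weight >= 2 * length. *)
Lemma weight_adm s : @pbw_adm n s -> Posz (2 * size s)%N <= weight s.
Proof.
case/andP => + _; elim: s => [|p s IH] /=; first by rewrite /weight big_nil.
by case/andP => hp /IH; rewrite weight_cons; lia.
Qed.

Lemma L0_L i m v : L0 (L i m v) = L i m (L0 v) - m%:~R *: L i m v.
Proof.
have L0E w : L0 w = \sum_(k < n) L k 0 w by rewrite /Lmode (lin_sum (Y_linl _ _)).
rewrite !L0E (lin_sum (L_lin _ _)); under eq_bigr => k _ do rewrite L_comm.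
rewrite big_split /= -big_mkcond big_pred1_eq.
by rewrite expr0n /= subr0 mulr0 mul0r scale0r addr0 sub0r add0r mulrNz scaleNr.
Qed.

Lemma L_shift i m v e : L0 v = e%:~R *: v -> L0 (L i m v) = (e - m)%:~R *: L i m v.
Proof.
by move=> hv; rewrite L0_L hv (linZ (L_lin _ _)) intrD intrN scalerDl scaleNr.
Qed.

Lemma L0_mono s : L0 (mono s) = (weight s)%:~R *: mono s.
Proof.
elim: s => [|[i m] s IH]; first by rewrite /= /Lmode Y_annihilate // /weight big_nil scale0r.
by rewrite mono_cons (L_shift _ _ IH) weight_cons addrC.
Qed.

(* An L(0)-eigenvector of eigenvalue e is a combination of admissible
   monomials of weight e: the other components are killed by applying the
   assignment t |-> (weight t - e)^-1 t to the relation (L(0) - e) v = 0. *)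
Lemma eigen_comb e v : L0 v = e%:~R *: v ->
  exists P, [/\ adm_comb P, all (fun p => weight p.1 == e) P & v = eval_comb mono P].
Proof.
move=> hv; have [P0 [a0 ev]] := eval_comb_span v.
pose P1 := [seq (p.1, (weight p.1 - e)%:~R * p.2) | p <- P0].
have a1 : adm_comb P1 by rewrite /adm_comb all_map.
have P1_0 : eval_comb mono P1 = eval_comb mono [::].
  have : L0 v - e%:~R *: v = 0 by rewrite hv subrr.
  rewrite {1 2}ev (eval_comb_map _ _ L0_lin) /eval_comb big_nil => ev0.
  rewrite -[RHS]ev0 scaler_sumr -sumrB big_map; apply: eq_bigr => p _ /=.
  rewrite L0_mono !scalerA -scalerBl.
  by rewrite intrD intrN mulrBl mulrC [_ * p.2]mulrC.
have := eval_comb_transfer (P2 := [::]) a1 isT P1_0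
  (fun s => ((weight s - e)%:~R)^-1 *: mono s).
rewrite /eval_comb big_nil big_map => other_0.
exists [seq p <- P0 | weight p.1 == e]; split; last 1 first.
- rewrite ev /eval_comb (bigID (fun p => weight p.1 == e)) /= big_filter -[RHS]addr0.
  congr (_ + _); rewrite -[RHS]other_0 [LHS]big_mkcond.
  apply: eq_bigr => p _ /=; case: eqP => [->|ne]; first by rewrite subrr mul0r scale0r.
  rewrite scalerA mulrAC mulfV ?mul1r // intr_eq0 subr_eq0; exact/eqP.
- by rewrite /adm_comb all_filter; apply/allP => p pP; apply/implyP => _; exact: (allP a0).
- by rewrite filter_all.
Qed.

Lemma eigen_neg e v : e < 0 -> L0 v = e%:~R *: v -> v = 0.
Proof.
move=> he /eigen_comb [P [aP wP ->]]; rewrite /eval_comb big1_seq // => p /andP [_ pP].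
by have := weight_adm (allP aP p pP); rewrite (eqP (allP wP p pP)); lia.
Qed.

Lemma sum_delta (W : lmodType F) (f : 'I_n -> W) i :
  \sum_(k < n) (k == i)%:R *: f k = f i.
Proof.
by rewrite (bigD1 i) //= eqxx scale1r big1 ?addr0 // => k /negbTE ->; rewrite scale0r.
Qed.

Lemma oms_indep (x : 'I_n -> F) : \sum_(k < n) x k *: oms k = 0 -> forall i, x i = 0.
Proof.
case: hV => _ [_ mono_indep] x_0 i.
pose S : seq (seq X) := [seq [:: (k, -2)] | k <- index_enum 'I_n].
pose a (s : seq X) := if s is [:: p] then x p.1 else 0.
apply: (mono_indep S a _ _ _ [:: (i, -2)]).
- by rewrite map_inj_uniq ?index_enum_uniq // => k k' [].
- by rewrite all_map; apply/allP.
- by rewrite big_map -[RHS]x_0; apply: eq_bigr => k _; rewrite mono_oms.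
- by apply/mapP; exists i; rewrite ?mem_index_enum.
Qed.

Lemma oms_neq0 i : oms i != 0.
Proof.
apply/eqP => oms_0; have := @oms_indep (fun k => (k == i)%:R).
by rewrite sum_delta => /(_ oms_0 i) /eqP; rewrite eqxx oner_eq0.
Qed.

Lemma L0_oms i : L0 (oms i) = 2%:~R *: oms i.
Proof. by rewrite -mono_oms L0_mono /weight big_seq1. Qed.

Lemma weight2_adm s : @pbw_adm n s -> weight s = 2 -> exists j, s = [:: (j, -2)].
Proof.
case: s => [|[j m] s]; first by rewrite /weight big_nil.
move=> s_adm; have := weight_adm s_adm; case/andP: s_adm => /andP [/= hm _] _.
rewrite weight_cons /=; case: s => [|q s] /=; last by lia.
by rewrite /weight big_nil => _ hw; exists j; congr [:: (_, _)]; lia.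
Qed.

Lemma eigen2_span v : L0 v = 2%:~R *: v ->
  exists a : 'I_n -> F, v = \sum_(k < n) a k *: oms k.
Proof.
move=> /eigen_comb [P [+ + ->]]; elim: P => [|p P IH] /=.
  by exists (fun _ => 0); rewrite /eval_comb big_nil big1 // => k _; rewrite scale0r.
move=> /andP [p_adm P_adm] /andP [/eqP p_wt P_wt].
rewrite /eval_comb big_cons -/(eval_comb _ P); have [a ->] := IH P_adm P_wt.
have [j ->] := weight2_adm p_adm p_wt; exists (fun k => a k + (k == j)%:R * p.2).
rewrite mono_oms.
under [RHS]eq_bigr => k _ do rewrite scalerDl -scalerA.
by rewrite big_split /= sum_delta addrC.
Qed.

Lemma oms_product i j : Y (oms i) 1 (oms j) = if i == j then 2%:~R *: oms j else 0.
Proof.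
have := L_comm i j 0 (-2) vac; rewrite (@L_vac i 0) // (lin0 (L_lin _ _)) add0r.
rewrite /Lmode /= Y_create => ->; case: eqP => [->|] //.
by rewrite mulr0 scale0r addr0 Y_create.
Qed.

Lemma oms_coef_inj (x y : 'I_n -> F) :
  \sum_(k < n) x k *: oms k = \sum_(k < n) y k *: oms k -> forall k, x k = y k.
Proof.
move=> e k; apply/eqP; rewrite -subr_eq0; apply/eqP; move: k; apply: oms_indep.
by under eq_bigr => k _ do rewrite scalerBl; rewrite sumrB e subrr.
Qed.

Lemma oms_comb_product (x y : 'I_n -> F) :
  Y (\sum_(k < n) x k *: oms k) 1 (\sum_(l < n) y l *: oms l) =
  \sum_(k < n) (2%:~R * (x k * y k)) *: oms k.
Proof.
rewrite (lin_sum (Y_linl _ _)); apply: eq_bigr => k _.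
rewrite (linZ (Y_linl _ _)) (lin_sum (Y_linr _ _)) (bigD1 k) //= big1 => [|l].
  by rewrite addr0 (linZ (Y_linr _ _)) oms_product eqxx !scalerA mulrC.
by rewrite (linZ (Y_linr _ _)) oms_product eq_sym => /negbTE ->; rewrite scaler0.
Qed.

Section Automorphism.
Variable g : V -> V.
Hypothesis g_aut : is_VOA_aut Y om g.

Let g_lin : linear g. Proof. by case: g_aut. Qed.
Let g_Y u k v : g (Y u k v) = Y (g u) k (g v). Proof. by case: g_aut => _ [_ []]. Qed.
Let g_om : g om = om. Proof. by case: g_aut => _ [_ []]. Qed.

Lemma aut_vac : g vac = vac.
Proof.
case: g_aut => _ [[h gK hK] _].
by have := g_Y vac (-1) (h vac); rewrite Y_vac eqxx hK Y_create.
Qed.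

Lemma aut_L0 v : g (L0 v) = L0 (g v).
Proof. by rewrite /Lmode g_Y g_om. Qed.

(* g preserves the weight-two space, so it acts there by a matrix A. *)
Lemma aut_oms_matrix : exists A : 'I_n -> 'I_n -> F,
  forall i, g (oms i) = \sum_(k < n) A i k *: oms k.
Proof.
have weight2 i : L0 (g (oms i)) = 2%:~R *: g (oms i).
  by rewrite -aut_L0 L0_oms (linZ g_lin).
by have [A hA] := boolp.choice (fun i => eigen2_span (weight2 i)); exists A.
Qed.

Section Matrix.
Variable A : 'I_n -> 'I_n -> F.
Hypothesis g_oms : forall i, g (oms i) = \sum_(k < n) A i k *: oms k.

(* Applying g to (om_i)_1 om_j = 2 delta_ij om_j. *)
Lemma aut_matrix_mul i j k : A i k * A j k = (i == j)%:R * A j k.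
Proof.
have rhs : g (if i == j then 2%:~R *: oms j else 0) =
    \sum_(l < n) (2%:~R * ((i == j)%:R * A j l)) *: oms l.
  case: eqP => [<-|_]; last first.
    by rewrite (lin0 g_lin) big1 // => l _; rewrite mul0r mulr0 scale0r.
  by rewrite (linZ g_lin) g_oms scaler_sumr; apply: eq_bigr => l _; rewrite scalerA mul1r.
have := congr1 g (oms_product i j); rewrite g_Y !g_oms oms_comb_product rhs.
by move/oms_coef_inj/(_ k)/mulfI; apply; rewrite intr_eq0.
Qed.

(* Applying g to om = sum_i om_i. *)
Lemma aut_matrix_colsum k : \sum_(i < n) A i k = 1.
Proof.
have := g_om; rewrite {2}(_ : om = \sum_(k < n) 1 *: oms k); last first.
  by apply: eq_bigr => i _; rewrite scale1r.
rewrite (lin_sum g_lin); under eq_bigr do rewrite g_oms; rewrite exchange_big /=.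
by under eq_bigr do rewrite -scaler_suml; move/oms_coef_inj.
Qed.

End Matrix.

Lemma aut_oms : exists sg : 'S_n, forall i, g (oms i) = oms (sg i).
Proof.
have [A g_oms] := aut_oms_matrix.
have [tau Atau] := idempotent_columns (aut_matrix_mul g_oms) (aut_matrix_colsum g_oms).
have g_tau i : g (oms i) = \sum_(k < n) (tau k == i)%:R *: oms k.
  by rewrite g_oms; apply: eq_bigr => k _; rewrite Atau.
have [|sg tau_sg] := @surj_perm _ tau.
  move=> i; case: (pickP (fun k => tau k == i)) => [k /eqP|tau_i]; first by exists k.
  have : g (oms i) = g 0 by rewrite g_tau (lin0 g_lin) big1 // => k _; rewrite tau_i scale0r.
  case: g_aut => _ [/bij_inj g_inj _] /g_inj /eqP.
  by rewrite (negbTE (oms_neq0 i)).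
by exists sg => i; rewrite g_tau; under eq_bigr do rewrite tau_sg; rewrite sum_delta.
Qed.

Lemma aut_mono : exists sg : 'S_n, forall s, g (mono s) = mono (perm_mono sg s).
Proof.
have [sg g_oms] := aut_oms; exists sg.
by elim=> [|[i m] s IH]; [exact: aut_vac | rewrite /= /Lmode g_Y g_oms -IH].
Qed.

End Automorphism.

(* S_n acts faithfully: sg is determined by where it sends the om_i. *)
Lemma perm_mono_faithful (sg tau : 'S_n) :
  (forall s, mono (perm_mono sg s) = mono (perm_mono tau s)) -> sg = tau.
Proof.
move=> same_action; apply/permP => i; apply/eqP/contraT => ne.
have e : oms (sg i) = oms (tau i) by rewrite -!mono_oms; exact: (same_action [:: (i, -2)]).
have := @oms_coef_inj (fun k => (k == sg i)%:R) (fun k => (k == tau i)%:R).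
by rewrite !sum_delta e => /(_ erefl (sg i)) /eqP; rewrite eqxx (negbTE ne) oner_eq0.
Qed.

Section Permutation.
Variable sg : 'S_n.

Local Notation monoS s := (mono (perm_mono sg s)).

Definition perm_map (v : V) : V :=
  eval_comb (fun s => monoS s) (sval (boolp.cid (eval_comb_span v))).

Lemma perm_map_comb P : adm_comb P ->
  perm_map (eval_comb mono P) = eval_comb (fun s => monoS s) P.
Proof.
move=> P_adm; rewrite /perm_map; case: boolp.cid => Q /= [Q_adm e].
by apply: eval_comb_transfer => //; rewrite -e.
Qed.

Lemma perm_map_lin : linear perm_map.
Proof.
move=> a u v; have [Pu [au ->]] := eval_comb_span u; have [Pv [av ->]] := eval_comb_span v.
rewrite -eval_comb_scale -eval_comb_cat perm_map_comb; last first.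
  by rewrite /adm_comb all_cat all_map; apply/andP.
by rewrite eval_comb_cat eval_comb_scale !perm_map_comb.
Qed.

Lemma perm_map_adm t : @pbw_adm n t -> perm_map (mono t) = monoS t.
Proof.
move=> t_adm; have := @perm_map_comb [:: (t, 1)].
by rewrite /eval_comb !big_seq1 !scale1r; apply; rewrite /adm_comb /= t_adm.
Qed.

Lemma perm_map_vac : perm_map vac = vac.
Proof. exact: (@perm_map_adm [::]). Qed.

(* Permuting the factors preserves weights, so perm_map preserves the
   L(0)-eigenspaces. *)
Lemma perm_map_eigen x e : L0 x = e%:~R *: x -> L0 (perm_map x) = e%:~R *: perm_map x.
Proof.
move=> /eigen_comb [P [P_adm P_wt ->]]; rewrite perm_map_comb // (eval_comb_map _ _ L0_lin).
rewrite /eval_comb scaler_sumr; apply: eq_big_seq => p pP.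
rewrite L0_mono /weight big_map -/(weight p.1) (eqP (allP P_wt p pP)).
by rewrite !scalerA mulrC.
Qed.

(* perm_map intertwines L_i(m) with L_{sg i}(m) on vectors of weight w + m,
   i.e. on the preimage of the weight-w space under L_i(m). *)
Definition commutes_at (w : int) i m := forall x, L0 x = (w + m)%:~R *: x ->
  perm_map (L i m x) = L (sg i) m (perm_map x).

Lemma commutes_source_neg w i m : w + m < 0 -> commutes_at w i m.
Proof.
move=> hwm x /(eigen_neg hwm) ->.
by rewrite (lin0 (L_lin _ _)) (lin0 perm_map_lin) (lin0 (L_lin _ _)).
Qed.

Lemma commutes_target_neg w i m : w < 0 -> commutes_at w i m.
Proof.
move=> hw x hx; have := L_shift i m hx; rewrite addrK => /(eigen_neg hw) ->.
have := L_shift (sg i) m (perm_map_eigen hx); rewrite addrK => /(eigen_neg hw) ->.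
exact: (lin0 perm_map_lin).
Qed.

Lemma commutes_on_adm w i m :
  (forall t, @pbw_adm n t -> weight t = w + m ->
     perm_map (L i m (mono t)) = L (sg i) m (perm_map (mono t))) ->
  commutes_at w i m.
Proof.
move=> h x /eigen_comb [P [P_adm P_wt ->]].
rewrite (eval_comb_map _ _ (L_lin _ _)) perm_map_comb // (eval_comb_map _ _ perm_map_lin).
rewrite (eval_comb_map _ _ (L_lin _ _)); apply: eq_big_seq => p pP.
by rewrite h ?perm_map_adm ?(eqP (allP P_wt p pP)) //; exact: (allP P_adm).
Qed.

(* The reduction step: if (i, m) cannot be put in front of an admissible
   monomial (j, p) :: t, the commutation relation rewrites L_i(m) L_j(p) as
   L_j(p) L_i(m) plus lower terms, each handled by one of the hypotheses:
   a lower target weight, a pair (j, p) earlier in the PBW order, or a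
   smaller mode m + p. *)
Lemma commutes_step (w : int) i m :
  (forall p, p <= -2 -> commutes_at (w + p) i m) ->
  (forall j p, p <= -2 -> ~~ pbw_le (i, m) (j, p) || (-1 <= m) -> commutes_at w j p) ->
  (forall p, p <= -2 -> commutes_at w i (m + p)) ->
  commutes_at w i m.
Proof.
move=> lower_weight earlier_pair smaller_mode; apply: commutes_on_adm => t t_adm t_wt.
have [im_adm|im_nadm] := boolP (@pbw_adm n ((i, m) :: t)).
  by rewrite -mono_cons !perm_map_adm.
case: t t_adm t_wt im_nadm => [|[j p] t] t_adm t_wt im_nadm.
  have hm : -1 <= m by move: im_nadm; rewrite /pbw_adm /= !andbT; lia.
  by rewrite perm_map_vac !L_vac // (lin0 perm_map_lin).
have /andP [/andP [hp t_low] t_sorted] := t_adm.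
have t'_adm : @pbw_adm n t by apply/andP; split; [exact: t_low | exact: path_sorted t_sorted].
have not_first : ~~ pbw_le (i, m) (j, p) || (-1 <= m).
  apply: contraT; rewrite negb_or negbK -ltNge => /andP [le_im lt_m].
  move: im_nadm; rewrite /pbw_adm /= le_im /=.
  by move: t_adm; rewrite /pbw_adm /= => /andP [/andP [-> ->] ->]; rewrite andbT; lia.
have t_eigen : L0 (mono t) = (w + m + p)%:~R *: mono t.
  by rewrite L0_mono (_ : weight t = w + m + p) //; move: t_wt; rewrite weight_cons /=; lia.
rewrite perm_map_adm // /= -(perm_map_adm t'_adm).
rewrite L_comm (linD perm_map_lin) [in RHS]L_comm (inj_eq (@perm_inj _ sg)).
rewrite (earlier_pair j p hp not_first); last first.
  by rewrite (L_shift _ _ t_eigen); congr (_%:~R *: _); lia.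
rewrite (lower_weight p hp); last by rewrite t_eigen; congr (_%:~R *: _); lia.
congr (_ + _); case: eqP => _; last exact: (lin0 perm_map_lin).
rewrite (linD perm_map_lin) !(linZ perm_map_lin) (smaller_mode p hp) //.
by rewrite t_eigen; congr (_%:~R *: _); lia.
Qed.

(* First the pairs with m <= -2, by induction on the position of (i, m) in
   the PBW order among the finitely many pairs with -w <= m <= -2. *)
Lemma commutes_low (w : nat) :
  (forall w' : int, w' < w -> forall i m, commutes_at w' i m) ->
  forall i m, m <= -2 -> commutes_at w i m.
Proof.
move=> lower_weight.
suff: forall k (i : 'I_n) (m : int), (i * w.+1 + absz (m + w%:Z)%R < k)%N -> m <= -2 ->
    commutes_at w i m.
  by move=> h i m; apply: h (ltnSn _).
elim=> // k IHk i m hk hm.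
have [?|hwm] := ltrP (w%:Z + m) 0; first exact: commutes_source_neg.
apply: commutes_step => [p hp | j p hp | p hp].
- have [?|?] := ltrP (w%:Z + p) 0; first exact: commutes_target_neg.
  by apply: lower_weight; lia.
- have [?|hwp] := ltrP (w%:Z + p) 0; first by move=> _; exact: commutes_source_neg.
  rewrite /pbw_le /= -(inj_eq val_inj) /= => earlier.
  apply: IHk (hp); move: earlier hk; case: ltngtP => /= [_|lt_ji|->]; [lia | | lia].
  have : (w.+1 + j * w.+1 <= i * w.+1)%N by rewrite -mulSn leq_mul2r lt_ji orbT.
  lia.
- have [?|?] := ltrP (w%:Z + (m + p)) 0; first exact: commutes_source_neg.
  by apply: IHk; lia.
Qed.

Lemma commutes_high (w : nat) :
  (forall w' : int, w' < w -> forall i m, commutes_at w' i m) ->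
  (forall i m, m <= -2 -> commutes_at w i m) ->
  forall i m, commutes_at w i m.
Proof.
move=> lower_weight low i m; have [|hm] := lerP m (-2); first exact: low.
have [k ->] : exists k : nat, m = k%:Z - 1 by exists (absz (m + 1)); lia.
elim/ltn_ind: k i {hm} => k IHk i.
apply: commutes_step => [p hp | j p hp _ | p hp].
- have [?|?] := ltrP (w%:Z + p) 0; first exact: commutes_target_neg.
  by apply: lower_weight; lia.
- exact: low.
- have [|?] := lerP (k%:Z - 1 + p) (-2); first exact: low.
  have [k' def_k'] : exists k' : nat, k%:Z - 1 + p = k'%:Z - 1.
    by exists (absz (k%:Z + p)); lia.
  by rewrite def_k'; apply: IHk; lia.
Qed.

Lemma commutes_everywhere w i m : commutes_at w i m.
Proof.
have [?|w_ge0] := ltrP w 0; first exact: commutes_target_neg.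
have [w' ->] : exists w' : nat, w = w' by exists (absz w); lia.
elim/ltn_ind: w' {w w_ge0} i m => w IHw i m.
have lower_weight (w' : int) : w' < w -> forall i m, commutes_at w' i m.
  have [?|w'_ge0] := ltrP w' 0; first by move=> _ i' m'; exact: commutes_target_neg.
  have [w'' ->] : exists w'' : nat, w' = w'' by exists (absz w'); lia.
  by move=> lt_w i' m'; apply: IHw; lia.
exact: commutes_high lower_weight (commutes_low lower_weight) i m.
Qed.

Lemma perm_map_L i m x : perm_map (L i m x) = L (sg i) m (perm_map x).
Proof.
have [P [_ ->]] := eval_comb_span x.
rewrite (eval_comb_map _ _ (L_lin _ _)) !(eval_comb_map _ _ perm_map_lin).
rewrite (eval_comb_map _ _ (L_lin _ _)); apply: eq_bigr => p _; congr (_ *: _).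
by apply: (@commutes_everywhere (weight p.1 - m)); rewrite subrK L0_mono.
Qed.

Lemma perm_map_mono s : perm_map (mono s) = monoS s.
Proof. by elim: s => [|[i m] s IH]; [exact: perm_map_vac | rewrite mono_cons perm_map_L IH]. Qed.

Lemma perm_map_Y_oms i l y : perm_map (Y (oms i) l y) = Y (oms (sg i)) l (perm_map y).
Proof. by have := perm_map_L i (l - 1) y; rewrite /Lmode subrK. Qed.

(* By the associativity formula, Y(L_i(m) u, k) is a combination of products
   of modes of om_i and of u; induction on the monomial. *)
Lemma perm_map_Y_mono s k v : perm_map (Y (mono s) k v) = Y (monoS s) k (perm_map v).
Proof.
elim: s k v => [|[i m] s IH] k v.
  by rewrite /= !Y_vac; case: (k == -1) => //; exact: (lin0 perm_map_lin).
have [K1 assoc1] := Y_assoc (oms i) (mono s) (m + 1) k v.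
have [K2 assoc2] := Y_assoc (oms (sg i)) (monoS s) (m + 1) k (perm_map v).
rewrite mono_cons /Lmode (assoc1 (maxn K1 K2)) ?leq_maxl //.
rewrite /= /Lmode (assoc2 (maxn K1 K2)) ?leq_maxr // (lin_sum perm_map_lin).
apply: eq_bigr => j _; rewrite (linZ perm_map_lin) (linB perm_map_lin) (linZ perm_map_lin).
by rewrite !IH !perm_map_Y_oms IH.
Qed.

Lemma perm_map_Y u k v : perm_map (Y u k v) = Y (perm_map u) k (perm_map v).
Proof.
have [P [P_adm ->]] := eval_comb_span u.
rewrite perm_map_comb // (eval_comb_map _ _ (Y_linl k v)) (eval_comb_map _ _ perm_map_lin).
by rewrite (eval_comb_map _ _ (Y_linl _ _)); apply: eq_bigr => p _; rewrite perm_map_Y_mono.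
Qed.

Lemma perm_map_om : perm_map om = om.
Proof.
rewrite (lin_sum perm_map_lin); under eq_bigr do rewrite -mono_oms perm_map_mono mono_oms.
by rewrite [RHS](reindex_inj (@perm_inj _ sg)).
Qed.

End Permutation.

Lemma perm_mapK (sg : 'S_n) : cancel (perm_map sg) (perm_map sg^-1).
Proof.
move=> v; have [P [P_adm ->]] := eval_comb_span v.
rewrite perm_map_comb // (eval_comb_map _ _ (perm_map_lin _)); apply: eq_bigr => p _.
rewrite perm_map_mono /perm_mono -map_comp; congr (_ *: mono _).
by rewrite map_id_in // => -[i m] _ /=; rewrite permK.
Qed.

Lemma perm_aut (sg : 'S_n) : is_VOA_aut Y om (perm_map sg).
Proof.
split; first exact: perm_map_lin.
split.
  exists (perm_map sg^-1); first exact: perm_mapK.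
  by have := perm_mapK sg^-1; rewrite invgK.
by split; [exact: perm_map_Y | exact: perm_map_om].
Qed.

End VirasoroTensor.

Theorem mainTheorem1 (R : realType) (c : CC R) (n : nat) (hn : (1 <= n)%N)
    (V : lmodType (CC R)) (Y : V -> int -> V -> V) (vac : V) (oms : 'I_n -> V)
    (hVOA : VOA_axioms Y vac (\sum_(i < n) oms i) (n%:R * c))
    (hV : is_univ_vir_tensor Y vac oms c) :
  (* every permutation of tensor factors acts by a VOA automorphism *)
  (forall sg : 'S_n, exists g : V -> V,
     is_VOA_aut Y (\sum_(i < n) oms i) g /\
     forall s, g (vir_mono Y vac oms s) = vir_mono Y vac oms (perm_mono sg s)) /\
  (* every VOA automorphism is such a permutation action *)
  (forall g : V -> V, is_VOA_aut Y (\sum_(i < n) oms i) g ->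
     exists sg : 'S_n,
       forall s, g (vir_mono Y vac oms s) = vir_mono Y vac oms (perm_mono sg s)) /\
  (* and the action of S_n is faithful *)
  (forall sg tau : 'S_n,
     (forall s, vir_mono Y vac oms (perm_mono sg s) = vir_mono Y vac oms (perm_mono tau s)) ->
     sg = tau).
Proof.
split; [|split].
- move=> sg; exists (perm_map hV sg).
  by split; [exact: perm_aut | exact: perm_map_mono].
- by move=> g /(aut_mono hVOA hV).
- exact: perm_mono_faithful hVOA hV.
Qed.
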